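(* Let $n\ge2$, and let $\mathcal K\subseteq\mathbb C^n$ be a subset such that for every $V\in\mathcal Z_n$ the set $\mathcal K\cap P^{-1}(V)$ has exactly one element; let $K:=(P|_{\mathcal K})^{-1}:\mathcal Z_n\to\mathbb C^n$. Then $K$ is continuous from $(\mathcal Z_n,d_F)$ to $(\mathbb C^n,d_\infty)$ if and only if $\mathcal K$ is closed in $(\mathbb C^n,d_\infty)$.
   Context: $\mathcal Z_n$ denotes the family of all multisets of complex numbers with exactly $n$ elements counted with multiplicity, with metric $d_F(U,V):=\min_{\tau\in\Pi_n}\max_{1\le j\le n}|u_j-v_{\tau(j)}|$ for $U=\{u_1,\dots,u_n\}$, $V=\{v_1,\dots,v_n\}$, where $\Pi_n$ is the set of permutations of $\{1,\dots,n\}$. $\mathbb C^n$ carries the metric $d_\infty(\mathbf u,\mathbf v)=\max_j|u_j-v_j|$. The map $P:\mathbb C^n\to\mathcal Z_n$ sends $(v_1,\dots,v_n)$ to the multiset $\{v_1,\dots,v_n\}$ (with multiplicities). *)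

From HB Require Import structures.
From mathcomp Require Import all_boot all_order all_algebra all_fingroup.
From mathcomp Require Import finmap multiset.
From mathcomp Require Import complex.
From mathcomp Require Import reals.
Set Implicit Arguments. Unset Strict Implicit. Unset Printing Implicit Defensive.
Import Order.TTheory GRing.Theory Num.Theory.
Local Open Scope mset_scope.
Local Open Scope ring_scope.

Section Defs.
Variable R : realType.
Local Notation C := (R[i]).

Definition cmod (z : C) : R := Num.sqrt (complex.Re z ^+ 2 + complex.Im z ^+ 2).

Definition d_inf (n : nat) (u v : 'rV[C]_n) : R :=
  \big[Num.max/0]_(j < n) cmod (u 0 j - v 0 j).

Definition Pm (n : nat) (v : 'rV[C]_n) : {mset C} :=
  seq_mset [seq v 0 j | j <- enum 'I_n].

Definition inZ (n : nat) (U : {mset C}) : Prop := size U = n.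

Definition dF_perm (n : nat) (U V : {mset C}) (s : 'S_n) : R :=
  \big[Num.max/0]_(j < n) cmod (nth 0 (U : seq C) j - nth 0 (V : seq C) (s j)).
Definition d_F (n : nat) (U V : {mset C}) : R :=
  \big[Num.min/@dF_perm n U V 1%g]_(s : 'S_n) @dF_perm n U V s.

Definition closed_inf (n : nat) (S : 'rV[C]_n -> Prop) : Prop :=
  forall x : 'rV[C]_n,
    (forall e : R, 0 < e -> exists y, S y /\ d_inf x y < e) -> S x.

Definition continuous_ZF (n : nat) (K : {mset C} -> 'rV[C]_n) : Prop :=
  forall U, inZ n U -> forall e : R, 0 < e -> exists2 d : R, 0 < d &
    forall V, inZ n V -> d_F n U V < d -> d_inf (K U) (K V) < e.
End Defs.

From HB Require Import structures.
From mathcomp Require Import all_boot all_order all_algebra all_fingroup.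
From mathcomp Require Import finmap multiset complex reals.
From mathcomp Require Import lra.
From Stdlib Require Import Classical.
Set Implicit Arguments. Unset Strict Implicit. Unset Printing Implicit Defensive.
Import Order.TTheory GRing.Theory Num.Theory.
Local Open Scope mset_scope.
Local Open Scope ring_scope.

(* If x lies in the closure of K, then for y in K close to x the multisets
   P x and P y are close, so K(P x) is close to K(P y) = y and hence to x;
   thus x = K(P x) lies in K.  Conversely, if K is closed and u = K(U), each
   of the finitely many coordinate permutations of u either lies in K, and
   then equals u because P is injective on K, or stays a positive distance
   away from K.  A multiset V that is d_F-close to U has K(V) d_inf-close to
   some permutation of u, which therefore lies in K and equals u. *)

Section Sup_metric.
Variable R : realType.
Local Notation C := (R[i]).

Lemma cmodE (z : C) : ((cmod z)%:C)%C = `|z|.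
Proof. by rewrite normc_def. Qed.

Lemma cmod_ge0 (z : C) : 0 <= cmod z.
Proof. exact: sqrtr_ge0. Qed.

Lemma cmod_eq0 (z : C) : cmod z = 0 -> z = 0.
Proof. by move=> z0; apply/normr0_eq0; rewrite -cmodE z0. Qed.

Lemma cmodB (a b : C) : cmod (a - b) = cmod (b - a).
Proof. by apply: complexI; rewrite !cmodE distrC. Qed.

Lemma cmodB_triangle (a b c : C) : cmod (a - c) <= cmod (a - b) + cmod (b - c).
Proof. by rewrite -lecR rmorphD /= !cmodE ler_distD. Qed.

Variable n : nat.
Implicit Types u v w : 'rV[C]_n.

Lemma d_inf_ge0 u v : 0 <= d_inf u v.
Proof. exact: bigmax_ge_id. Qed.

Lemma cmod_le_d_inf u v j : cmod (u 0 j - v 0 j) <= d_inf u v.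
Proof. exact: le_bigmax. Qed.

Lemma d_infC u v : d_inf u v = d_inf v u.
Proof. by apply: eq_bigr => j _; rewrite cmodB. Qed.

Lemma d_inf_triangle u v w : d_inf u w <= d_inf u v + d_inf v w.
Proof.
apply: bigmax_le => [|j _]; first by rewrite addr_ge0 ?d_inf_ge0.
apply: le_trans (cmodB_triangle _ (v 0 j) _) _.
by rewrite lerD ?cmod_le_d_inf.
Qed.

Lemma d_inf_le0 u v : d_inf u v <= 0 -> u = v.
Proof.
move=> uv0; apply/rowP => j; apply/eqP; rewrite -subr_eq0; apply/eqP.
apply: cmod_eq0; apply/eqP; rewrite eq_le cmod_ge0 andbT.
exact: le_trans (cmod_le_d_inf u v j) uv0.
Qed.

Lemma closed_inf_gap (S : 'rV[C]_n -> Prop) x : closed_inf S -> ~ S x ->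
  exists2 d, 0 < d & forall y, S y -> d <= d_inf x y.
Proof.
move=> Sclosed Sx; apply: NNPP => no_gap; apply: Sx; apply: Sclosed => e e0.
apply: NNPP => no_near; apply: no_gap; exists e => // y Sy.
by rewrite leNgt; apply/negP => xy; apply: no_near; exists y.
Qed.

End Sup_metric.

Lemma common_radius (R : realType) (I : finType) (Q : I -> R -> Prop) :
  (forall i d d', 0 < d' <= d -> Q i d -> Q i d') ->
  (forall i, exists2 d, 0 < d & Q i d) ->
  exists2 d, 0 < d & forall i, Q i d.
Proof.
move=> Qmono Qex.
suff [d d0 Qd] : exists2 d, 0 < d & forall i, i \in enum I -> Q i d.
  by exists d => // i; apply: Qd; rewrite mem_enum.
elim: (enum I) => [|i s [d2 d20 Qd2]]; first by exists 1.
have [d1 d10 Qd1] := Qex i.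
have d0 : 0 < Num.min d1 d2 by rewrite lt_min d10 d20.
exists (Num.min d1 d2) => // j; rewrite inE => /predU1P [->|js].
  by apply: Qmono Qd1; rewrite d0 ge_min lexx.
by apply: Qmono (Qd2 _ js); rewrite d0 ge_min lexx orbT.
Qed.

Section Multiset_metric.
Variables (R : realType) (n : nat).
Local Notation C := (R[i]).
Implicit Types u v w : 'rV[C]_n.

Lemma size_Pm v : size (Pm v : seq C) = n.
Proof.
by rewrite /Pm (perm_size (perm_eq_seq_mset _)) size_map size_enum_ord.
Qed.

Lemma inZ_Pm v : inZ n (Pm v).
Proof. exact: size_Pm. Qed.

Lemma Pm_enum v : exists s : 'S_n, forall j : 'I_n, nth 0 (Pm v : seq C) j = v 0 (s j).
Proof.
have : perm_eq (Pm v : seq C) (mktuple (v 0)).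
  by rewrite /Pm (permPl (perm_eq_seq_mset _)) /= /image_mem enumT.
move=> /tuple_permP [s vs]; exists s => j.
by rewrite vs (nth_map j) ?size_enum_ord // nth_ord_enum tnth_mktuple.
Qed.

Lemma Pm_col_perm (s : 'S_n) v : Pm (col_perm s v) = Pm v.
Proof.
apply/eq_seq_msetP.
have -> : [seq col_perm s v 0 j | j <- enum 'I_n] = map (v 0) (map s (enum 'I_n)).
  by rewrite -[in RHS]map_comp; apply: eq_map => j; rewrite mxE.
apply: perm_map; apply: uniq_perm.
- by rewrite map_inj_uniq ?enum_uniq //; apply: perm_inj.
- exact: enum_uniq.
- move=> j; rewrite mem_enum inE; apply/mapP.
  by exists (s^-1 j)%g; rewrite ?mem_enum ?permKV.
Qed.

Lemma d_F_lt (U V : {mset C}) e : d_F n U V < e -> exists s : 'S_n, dF_perm U V s < e.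
Proof.
move=> UVe; apply/existsP; apply: contraLR UVe; rewrite negb_exists -leNgt.
by move=> /forallP far; apply: le_bigmin => [|s _]; rewrite leNgt; apply: far.
Qed.

Lemma d_F_Pm_le u v : d_F n (Pm u) (Pm v) <= d_inf u v.
Proof.
have [su Hu] := Pm_enum u; have [sv Hv] := Pm_enum v.
apply: le_trans (bigmin_le _ (su * sv^-1)%g _) _.
apply: bigmax_le => [|j _]; first exact: d_inf_ge0.
by rewrite Hu Hv permM permKV cmod_le_d_inf.
Qed.

Lemma d_F_Pm_lt u w e :
  d_F n (Pm u) (Pm w) < e -> exists s : 'S_n, d_inf (col_perm s u) w < e.
Proof.
move=> /d_F_lt [s /bigmax_ltP [e0 close]].
have [su Hu] := Pm_enum u; have [sw Hw] := Pm_enum w.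
exists (sw^-1 * s^-1 * su)%g; apply/bigmax_ltP; split=> // k _.
have := close (s^-1 (sw^-1 k))%g isT.
by rewrite Hu Hw !permKV mxE !permM.
Qed.

End Multiset_metric.

Section Selector.
Variables (R : realType) (n : nat).
Local Notation C := (R[i]).
Variables (Kset : 'rV[C]_n -> Prop) (K : {mset C} -> 'rV[C]_n).
Hypothesis Pm_inj : forall v w, Kset v -> Kset w -> Pm v = Pm w -> v = w.
Hypothesis K_sect : forall V, inZ n V -> Kset (K V) /\ Pm (K V) = V.

Lemma K_Pm v : Kset v -> K (Pm v) = v.
Proof. by move=> Kv; have [KKv /Pm_inj] := K_sect (inZ_Pm v); apply. Qed.

Lemma continuous_ZF_closed_inf : continuous_ZF K -> closed_inf Kset.
Proof.
move=> Kcont x x_adh; suff <- : K (Pm x) = x by case: (K_sect (inZ_Pm x)).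
apply/d_inf_le0/ler_addgt0Pr => e e0; rewrite add0r.
have e20 : 0 < e / 2 by rewrite divr_gt0.
have [d d0 Kd] := Kcont _ (inZ_Pm x) _ e20.
have [|y [Ky xy]] := x_adh (Num.min d (e / 2)); first by rewrite lt_min d0 e20.
have PxPy : d_F n (Pm x) (Pm y) < d.
  by apply: le_lt_trans (d_F_Pm_le x y) (lt_le_trans xy _); rewrite ge_min lexx.
have := Kd _ (inZ_Pm y) PxPy; rewrite (K_Pm Ky) => Kxy.
have xy2 : d_inf x y <= e / 2 by apply: ltW (lt_le_trans xy _); rewrite ge_min lexx orbT.
have := d_inf_triangle (K (Pm x)) y x; rewrite [d_inf y x]d_infC; lra.
Qed.

Lemma closed_inf_continuous_ZF : closed_inf Kset -> continuous_ZF K.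
Proof.
move=> Kclosed U ZU e e0; have [KU PKU] := K_sect ZU.
have [d d0 gap] : exists2 d, 0 < d & forall s : 'S_n,
    Kset (col_perm s (K U)) \/ forall y, Kset y -> d <= d_inf (col_perm s (K U)) y.
  apply: common_radius => [s d d' /andP [_ d'd] [Ks|far]|s]; [by left|right|].
    by move=> y Ky; apply: le_trans d'd (far y Ky).
  have [Ks|Ks] := classic (Kset (col_perm s (K U))); first by exists 1 => //; left.
  by have [d' d'0 far] := closed_inf_gap Kclosed Ks; exists d' => //; right.
exists (Num.min d e) => [|V ZV UV]; first by rewrite lt_min d0 e0.
have [KV PKV] := K_sect ZV.
have [s sUV] : exists s : 'S_n, d_inf (col_perm s (K U)) (K V) < Num.min d e.
  by apply: d_F_Pm_lt; rewrite PKU PKV.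
have [Ks|far] := gap s.
  rewrite -(Pm_inj Ks KU (Pm_col_perm _ _)); apply: lt_le_trans sUV _.
  by rewrite ge_min lexx orbT.
by have := le_lt_trans (far _ KV) sUV; rewrite lt_min ltxx.
Qed.

End Selector.

Theorem theorem4p1 (R : realType) (n : nat) (hn : (2 <= n)%N)
  (Kset : 'rV[R[i]]_n -> Prop)
  (hK : forall V : {mset R[i]}, inZ n V -> exists! v, Kset v /\ Pm v = V)
  (K : {mset R[i]} -> 'rV[R[i]]_n)
  (hKdef : forall V : {mset R[i]}, inZ n V -> Kset (K V) /\ Pm (K V) = V) :
  continuous_ZF K <-> closed_inf Kset.
Proof.
have Pm_inj v w : Kset v -> Kset w -> Pm v = Pm w -> v = w.
  move=> Kv Kw Pvw; have [x [_ x_uniq]] := hK _ (inZ_Pm v).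
  by rewrite -(x_uniq v (conj Kv erefl)) (x_uniq w (conj Kw (esym Pvw))).
split; [exact: continuous_ZF_closed_inf | exact: closed_inf_continuous_ZF].
Qed.
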